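(* For every positive integer $\ell$ and every integer $n\ge n_0:=3\ell+4$, there is a directed tree with $n$ vertices, in which every vertex has degree at most three and every directed path has length at most $\ell$, whose span is at least $\lceil(\ell+1)/2\rceil=\lceil(n_0-1)/6\rceil$.
   Context: A directed tree is a DAG (directed acyclic graph) whose underlying undirected graph is a tree. An upward-planar layered drawing of a DAG $G$ maps each vertex $v$ to a point in the plane whose y-coordinate $y(v)$ is an integer, and each edge $(u,v)$ (directed from tail $u$ to head $v$) to a strictly y-monotone curve going upward from $u$ to $v$ (so $y(u)<y(v)$), such that no two edges intersect except at common endpoints. The span of an edge $(u,v)$ in such a drawing $\Gamma$ is $y(v)-y(u)$; the span of $\Gamma$ is the maximum span of its edges; the span of an upward-planar DAG $G$ is the minimum span over all its upward-planar layered drawings. The degree of a vertex is its total number of incident edges. The length of a directed path is its number of edges. *)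

From Stdlib Require Import Reals ZArith.
From mathcomp Require Import all_boot.
Set Implicit Arguments. Unset Strict Implicit. Unset Printing Implicit Defensive.

(* A directed graph on vertex set 'I_n: e u v  means an edge u -> v. *)

Definition uadj (n : nat) (e : rel 'I_n) : rel 'I_n := fun u v => e u v || e v u.

Definition simple_underlying (n : nat) (e : rel 'I_n) : Prop :=
  (forall u, ~~ e u u) /\ (forall u v, e u v -> ~~ e v u).

Definition has_ucycle (n : nat) (e : rel 'I_n) : Prop :=
  exists s : seq 'I_n, [/\ 3 <= size s, uniq s & cycle (uadj e) s].

Definition underlying_tree (n : nat) (e : rel 'I_n) : Prop :=
  [/\ 0 < n, simple_underlying e, (forall u v, connect (uadj e) u v) & ~ has_ucycle e].

Definition dag (n : nat) (e : rel 'I_n) : Prop :=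
  forall u v, e u v -> ~~ connect e v u.

Definition directed_tree (n : nat) (e : rel 'I_n) : Prop :=
  dag e /\ underlying_tree e.

Definition degree (n : nat) (e : rel 'I_n) (v : 'I_n) : nat :=
  #|[set w | uadj e v w]|.

Definition paths_at_most (n : nat) (e : rel 'I_n) (l : nat) : Prop :=
  forall (x : 'I_n) (p : seq 'I_n), path e x p -> size p <= l.

(* Upward-planar layered drawing.
   y v : integer y-coordinate of v; px v : its x-coordinate; the point of v is
   (px v, y v).  crv u v : [0,1] -> R^2 is the curve of edge (u,v),
   given as a continuous map R -> R*R (only its restriction to [0,1] matters). *)
Definition vpt (n : nat) (px : 'I_n -> R) (y : 'I_n -> Z) (v : 'I_n) : R * R :=
  (px v, IZR (y v)).

Definition in01 (t : R) : Prop := (Rle 0 t /\ Rle t 1).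

Record layered_drawing (n : nat) (e : rel 'I_n)
    (px : 'I_n -> R) (y : 'I_n -> Z) (crv : 'I_n -> 'I_n -> R -> R * R) : Prop := {
  ld_inj : forall u v, vpt px y u = vpt px y v -> u = v;
  ld_cont : forall u v, e u v ->
      continuity (fun t => fst (crv u v t)) /\ continuity (fun t => snd (crv u v t));
  ld_start : forall u v, e u v -> crv u v R0 = vpt px y u;
  ld_end : forall u v, e u v -> crv u v R1 = vpt px y v;
  ld_mono : forall u v, e u v -> forall s t, in01 s -> in01 t -> Rlt s t ->
      Rlt (snd (crv u v s)) (snd (crv u v t));
  ld_novert : forall u v, e u v -> forall t, Rlt 0 t /\ Rlt t 1 ->
      forall w, crv u v t <> vpt px y w;
  ld_planar : forall u v u' v', e u v -> e u' v' -> (u, v) <> (u', v') ->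
      forall s t, in01 s -> in01 t -> crv u v s = crv u' v' t ->
      exists w, (w = u \/ w = v) /\ (w = u' \/ w = v') /\ crv u v s = vpt px y w
}.

Definition drawing_span_ge (n : nat) (e : rel 'I_n) (y : 'I_n -> Z) (k : nat) : Prop :=
  exists u v, e u v /\ (Z.of_nat k <= y v - y u)%Z.

(* G is upward-planar (has a drawing) and its span (min over drawings) is >= k *)
Definition span_ge (n : nat) (e : rel 'I_n) (k : nat) : Prop :=
  (exists px y crv, @layered_drawing n e px y crv) /\
  forall px y crv, @layered_drawing n e px y crv -> drawing_span_ge e y k.

(* The tree has a root with three directed paths ("columns") of 2m + 1 vertices, m = l/2,
   each attached by its middle vertex, plus a zigzag tail that pads the number of vertices.
   A level function raising by one along every edge bounds directed paths by l, and a
   straight-line drawing shows the tree is upward planar.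
   For the span, read a drawing height by height: the abscissa of a directed path is a
   continuous function of the height, and by the intermediate value theorem two paths sharing
   no vertex in a height range keep their left-to-right order there.  Just above the root one
   column lies between the other two, which meet only at the root.  If every edge spanned at
   most m levels, the lower half of that middle column would start no higher than the root
   and climb to the middle vertex, hence be squeezed between the outer columns down to the
   height of the root, where they coincide. *)
From HB Require Import structures.
From Stdlib Require Import Reals ZArith Lra Lia Ranalysis5 ClassicalEpsilon Classical.
From mathcomp Require Import all_boot zify.
Set Implicit Arguments. Unset Strict Implicit. Unset Printing Implicit Defensive.

Section IncreasingInverse.
Local Open Scope R_scope.

Definition clamp (a b h : R) : R := Rmin b (Rmax a h).

Lemma clamp_in a b h : a <= b -> a <= clamp a b h <= b.
Proof. by rewrite /clamp /Rmin /Rmax; do 2 case: Rle_dec; lra. Qed.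

Lemma clamp_id a b h : a <= h <= b -> clamp a b h = h.
Proof. by rewrite /clamp /Rmin /Rmax; do 2 case: Rle_dec; lra. Qed.

Lemma clamp_left a b h : a <= b -> h <= a -> clamp a b h = a.
Proof. by rewrite /clamp /Rmin /Rmax; do 2 case: Rle_dec; lra. Qed.

Lemma clamp_right a b h : a <= b -> b <= h -> clamp a b h = b.
Proof. by rewrite /clamp /Rmin /Rmax; do 2 case: Rle_dec; lra. Qed.

Lemma clamp_lipschitz a b h h' :
  a <= b -> Rabs (clamp a b h - clamp a b h') <= Rabs (h - h').
Proof.
  rewrite /clamp /Rmin /Rmax /Rabs.
  by repeat destruct Rle_dec; repeat destruct Rcase_abs; lra.
Qed.

Lemma no_root_same_sign f a b : continuity f -> a <= b ->
  (forall h, a <= h <= b -> f h <> 0) -> 0 < f a <-> 0 < f b.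
Proof.
  move=> Hc [Hab|<-] Hnz; last by [].
  have Ha := Hnz a ltac:(lra); have Hb := Hnz b ltac:(lra).
  have Hc' : forall x, a <= x <= b -> continuity_pt (fun x => - f x) x.
    by move=> x _; apply: continuity_pt_opp.
  split=> H.
  - case: (Rlt_or_le 0 (f b)) => // Hle; exfalso.
    have [z [Hz Hfz]] := IVT_interv (fun x => - f x) a b Hc' Hab ltac:(lra) ltac:(lra).
    by apply: (Hnz z Hz); lra.
  - case: (Rlt_or_le 0 (f a)) => // Hle; exfalso.
    have [z [Hz Hfz]] := IVT_interv f a b (fun x _ => Hc x) Hab ltac:(lra) ltac:(lra).
    exact: (Hnz z Hz).
Qed.

Definition increasing01 (g : R -> R) : Prop :=
  forall s t, 0 <= s -> s < t -> t <= 1 -> g s < g t.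

Variable g : R -> R.
Hypotheses (g_cont : continuity g) (g_incr : increasing01 g).

Lemma increasing01_le s t : 0 <= s -> s <= t -> t <= 1 -> g s <= g t.
Proof. by move=> H0 [Hst|<-] H1; [left; apply: g_incr|right]. Qed.

Definition param_at (h : R) : R :=
  epsilon (inhabits 0) (fun t => 0 <= t <= 1 /\ g t = clamp (g 0) (g 1) h).

Lemma param_atP h : 0 <= param_at h <= 1 /\ g (param_at h) = clamp (g 0) (g 1) h.
Proof.
  rewrite /param_at; apply epsilon_spec.
  have g01 : g 0 <= g 1 by apply: increasing01_le; lra.
  have [t [Ht Hgt]] := f_interv_is_interv g 0 1 (clamp (g 0) (g 1) h)
    ltac:(lra) (clamp_in h g01) (fun t _ => g_cont t).
  by exists t.
Qed.

Lemma param_at_lt h t : 0 <= t <= 1 -> clamp (g 0) (g 1) h < g t -> param_at h < t.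
Proof.
  move=> Ht Hlt; have [Hp Hgp] := param_atP h.
  case: (Rlt_or_le (param_at h) t) => // Hle.
  have := increasing01_le (proj1 Ht) Hle (proj2 Hp); lra.
Qed.

Lemma param_at_gt h t : 0 <= t <= 1 -> g t < clamp (g 0) (g 1) h -> t < param_at h.
Proof.
  move=> Ht Hlt; have [Hp Hgp] := param_atP h.
  case: (Rlt_or_le t (param_at h)) => // Hle.
  have := increasing01_le (proj1 Hp) Hle (proj2 Ht); lra.
Qed.

Lemma param_at_upper h0 eps : 0 < eps ->
  exists2 d, 0 < d & forall h, Rabs (h - h0) < d -> param_at h < param_at h0 + eps.
Proof.
  move=> Heps; have [Hp0 Hg0] := param_atP h0.
  case: (Rle_or_lt (param_at h0 + eps) 1) => Hle; last first.
    by exists 1 => [|h _]; [lra | have [Hp _] := param_atP h; lra].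
  exists (g (param_at h0 + eps) - g (param_at h0)) => [|h Hh].
    by have := g_incr (proj1 Hp0) (_ : param_at h0 < param_at h0 + eps) Hle; lra.
  apply: param_at_lt; first lra.
  have g01 : g 0 <= g 1 by apply: increasing01_le; lra.
  have := clamp_lipschitz h h0 g01; have := Rle_abs (clamp (g 0) (g 1) h - clamp (g 0) (g 1) h0).
  lra.
Qed.

Lemma param_at_lower h0 eps : 0 < eps ->
  exists2 d, 0 < d & forall h, Rabs (h - h0) < d -> param_at h0 - eps < param_at h.
Proof.
  move=> Heps; have [Hp0 Hg0] := param_atP h0.
  case: (Rle_or_lt 0 (param_at h0 - eps)) => Hle; last first.
    by exists 1 => [|h _]; [lra | have [Hp _] := param_atP h; lra].
  exists (g (param_at h0) - g (param_at h0 - eps)) => [|h Hh].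
    by have := g_incr Hle (_ : param_at h0 - eps < param_at h0) (proj2 Hp0); lra.
  apply: param_at_gt; first lra.
  have g01 : g 0 <= g 1 by apply: increasing01_le; lra.
  have := clamp_lipschitz h0 h g01; have := Rle_abs (clamp (g 0) (g 1) h0 - clamp (g 0) (g 1) h).
  rewrite Rabs_minus_sym in Hh; lra.
Qed.

Lemma continuity_param_at : continuity param_at.
Proof.
  move=> h0 eps Heps; have [d1 Hd1 Hup] := param_at_upper h0 Heps.
  have [d2 Hd2 Hlo] := param_at_lower h0 Heps.
  exists (Rmin d1 d2); split; first exact: Rmin_pos.
  move=> h [_ Hh]; rewrite /= /R_dist in Hh *.
  have := Hup h ltac:(have := Rmin_l d1 d2; lra); have := Hlo h ltac:(have := Rmin_r d1 d2; lra).
  by move=> H1 H2; apply: Rabs_def1; lra.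
Qed.

End IncreasingInverse.

Section LayeredDrawing.
Local Open Scope R_scope.
Variables (n : nat) (e : rel 'I_n) (px : 'I_n -> R) (y : 'I_n -> Z)
  (crv : 'I_n -> 'I_n -> R -> R * R).
Hypothesis D : layered_drawing e px y crv.

Definition height (v : 'I_n) : R := IZR (y v).
Definition edge_height u v t : R := snd (crv u v t).

Definition edge_x u v h : R := fst (crv u v (param_at (edge_height u v) h)).

Section Edge.
Variables u v : 'I_n.
Hypothesis uv : e u v.

Lemma edge_height0 : edge_height u v 0 = height u.
Proof. by rewrite /edge_height (ld_start D uv). Qed.

Lemma edge_height1 : edge_height u v 1 = height v.
Proof. by rewrite /edge_height (ld_end D uv). Qed.

Lemma increasing01_edge_height : increasing01 (edge_height u v).
Proof. by move=> s t *; apply: (ld_mono D uv); rewrite /in01; lra. Qed.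

Lemma continuity_edge_height : continuity (edge_height u v).
Proof. exact: (proj2 (ld_cont D uv)). Qed.

Lemma height_edge_lt : height u < height v.
Proof.
  rewrite -edge_height0 -edge_height1.
  apply: increasing01_edge_height; lra.
Qed.

Lemma y_edge_lt : (y u < y v)%Z.
Proof. exact: lt_IZR height_edge_lt. Qed.

Lemma height_edge_succ_le : height u + 1 <= height v.
Proof. rewrite /height -plus_IZR; apply: IZR_le; have := y_edge_lt; lia. Qed.

Lemma continuity_edge_x : continuity (edge_x u v).
Proof.
  move=> h; apply: (continuity_pt_comp (param_at (edge_height u v)) (fun t => fst (crv u v t))).
  - exact: continuity_param_at continuity_edge_height increasing01_edge_height h.
  - exact: (proj1 (ld_cont D uv)).
Qed.

Lemma param_at_edge h :
  0 <= param_at (edge_height u v) h <= 1 /\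
  edge_height u v (param_at (edge_height u v) h) = clamp (height u) (height v) h.
Proof.
  rewrite -edge_height0 -edge_height1.
  exact: param_atP continuity_edge_height increasing01_edge_height h.
Qed.

Lemma edge_x_below h : h <= height u -> edge_x u v h = px u.
Proof.
  move=> Hh; have [Ht Hgt] := param_at_edge h; have Huv := height_edge_lt.
  rewrite clamp_left in Hgt; try lra.
  rewrite /edge_x; set t := param_at _ h in Ht Hgt *.
  have -> : t = 0.
    case: Ht => [[Ht|<-] Ht1] //.
    have := increasing01_edge_height (Rle_refl 0) Ht Ht1; rewrite edge_height0; lra.
  by rewrite (ld_start D uv).
Qed.

Lemma edge_x_above h : height v <= h -> edge_x u v h = px v.
Proof.
  move=> Hh; have [Ht Hgt] := param_at_edge h; have Huv := height_edge_lt.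
  rewrite clamp_right in Hgt; try lra.
  rewrite /edge_x; set t := param_at _ h in Ht Hgt *.
  have -> : t = 1.
    case: Ht => [Ht0 [Ht|->]] //.
    have := increasing01_edge_height Ht0 Ht (Rle_refl 1); rewrite edge_height1; lra.
  by rewrite (ld_end D uv).
Qed.

Lemma edge_point h : height u <= h <= height v ->
  in01 (param_at (edge_height u v) h) /\
  crv u v (param_at (edge_height u v) h) = (edge_x u v h, h).
Proof.
  move=> Hh; have [Ht Hgt] := param_at_edge h; split; first exact: Ht.
  rewrite clamp_id // /edge_height in Hgt.
  rewrite /edge_x; set t := param_at _ h in Hgt *.
  by rewrite -Hgt -surjective_pairing.
Qed.

End Edge.

(* A telescoping sum of the displacements [edge_x - px] of the edges: at height [h] at most
   one edge contributes, so this is the abscissa of the drawn path [x :: p] at height [h]. *)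
Fixpoint path_x (x : 'I_n) (p : seq 'I_n) (h : R) : R :=
  if p is z :: p' then edge_x x z h + path_x z p' h - px z else px x.

Lemma continuity_path_x x p : path e x p -> continuity (path_x x p).
Proof.
  elim: p x => [|z p IH] x /=; first by move=> _; apply: continuity_const.
  case/andP=> xz zp h.
  apply: continuity_pt_minus; last exact: continuity_pt_const.
  exact: continuity_pt_plus (continuity_edge_x xz h) (IH z zp h).
Qed.

Lemma height_path_le x p : path e x p -> height x <= height (last x p).
Proof.
  elim: p x => [|z p IH] x /=; first lra.
  by case/andP=> /height_edge_lt xz /IH; lra.
Qed.

Lemma y_path_size x p : path e x p -> (y x + Z.of_nat (size p) <= y (last x p))%Z.
Proof.
  elim: p x => [|z p IH] x /=; first lia.
  by case/andP=> /y_edge_lt xz /IH; lia.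
Qed.

Lemma path_x_below x p h : path e x p -> h <= height x -> path_x x p h = px x.
Proof.
  elim: p x => [|z p IH] x //= /andP [xz zp] Hh.
  have Hxz := height_edge_lt xz.
  by rewrite (edge_x_below xz Hh) (IH z zp); lra.
Qed.

Lemma path_x_above x p h : path e x p -> height (last x p) <= h -> path_x x p h = px (last x p).
Proof.
  elim: p x => [|z p IH] x //= /andP [xz zp] Hh.
  have Hzp := height_path_le zp.
  by rewrite (edge_x_above xz) ?(IH z zp); lra.
Qed.

Lemma path_x_on_edge x p h : path e x p -> p <> [::] -> height x <= h <= height (last x p) ->
  exists a b, [/\ e a b, a \in x :: p, b \in x :: p, height a <= h <= height b
                & path_x x p h = edge_x a b h].
Proof.
  elim: p x => [|z p IH] x //= /andP [xz zp] _ Hh.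
  case: (Rle_or_lt h (height z)) => Hz.
  - exists x, z; split; rewrite ?inE ?eqxx ?orbT //; first lra.
    by rewrite (path_x_below zp Hz); lra.
  - case: p zp IH Hh => [|w p] zp IH Hh; first by move: Hh => /=; lra.
    have [a [b [ab Ha Hb Hab ->]]] := IH z zp ltac:(discriminate) ltac:(lra).
    exists a, b; split => //; [by rewrite in_cons Ha orbT | by rewrite in_cons Hb orbT |].
    by rewrite (edge_x_above xz); lra.
Qed.

Lemma path_x_neq x p x' p' h : path e x p -> p <> [::] -> path e x' p' -> p' <> [::] ->
  height x <= h <= height (last x p) -> height x' <= h <= height (last x' p') ->
  (forall w, w \in x :: p -> w \in x' :: p' -> height w < h) ->
  path_x x p h <> path_x x' p' h.
Proof.
  move=> xp p0 xp' p0' Hh Hh' Hcommon Heq.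
  have [a [b [ab Ha Hb Hab Ex]]] := path_x_on_edge xp p0 Hh.
  have [a' [b' [ab' Ha' Hb' Hab' Ex']]] := path_x_on_edge xp' p0' Hh'.
  have [[_ Eb]|Hne] := eqVneq (a, b) (a', b').
  - subst b'; by case: (Rlt_irrefl h); apply: Rle_lt_trans (proj2 Hab) (Hcommon b Hb Hb').
  - have [Ht Hc] := edge_point ab Hab; have [Ht' Hc'] := edge_point ab' Hab'.
    have Hmeet :
        crv a b (param_at (edge_height a b) h) = crv a' b' (param_at (edge_height a' b') h).
      by rewrite Hc Hc' -Ex -Ex' Heq.
    have [w [Hw [Hw' Hpt]]] := ld_planar D ab ab' (elimN eqP Hne) Ht Ht' Hmeet.
    have Hwh : height w = h by move: Hpt; rewrite Hc /vpt; case.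
    have Hwp : w \in x :: p by case: Hw => ->.
    have Hwp' : w \in x' :: p' by case: Hw' => ->.
    by have := Hcommon w Hwp Hwp'; lra.
Qed.

Lemma path_x_lt_iff x p x' p' a b : path e x p -> p <> [::] -> path e x' p' -> p' <> [::] ->
  a <= b -> height x <= a -> b <= height (last x p) -> height x' <= a -> b <= height (last x' p') ->
  (forall w, w \in x :: p -> w \in x' :: p' -> height w < a) ->
  path_x x p a < path_x x' p' a <-> path_x x p b < path_x x' p' b.
Proof.
  move=> xp p0 xp' p0' ab Ha Hb Ha' Hb' Hcommon.
  have Hsign := no_root_same_sign (f := fun h => path_x x' p' h - path_x x p h) (a := a) (b := b).
  have : 0 < path_x x' p' a - path_x x p a <-> 0 < path_x x' p' b - path_x x p b; last lra.
  apply: Hsign => //.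
  - by move=> h; apply: continuity_pt_minus; apply: continuity_path_x.
  - move=> h Hh /Rminus_diag_uniq Heq.
    apply: (path_x_neq xp p0 xp' p0' (h := h)) => //; try lra.
    by move=> w Hw Hw'; have := Hcommon w Hw Hw'; lra.
Qed.

(* From height [height s + /2] up to [height cM] the middle arm stays strictly between the
   outer ones, so the lower path reaches [cM] between them and, going down, stays between them
   until height [height s], where both outer arms are at the point [s]. *)
Lemma no_lower_path_to_middle_arm s pL cM pM pR d q :
  path e s pL -> pL <> [::] -> path e s (cM :: pM) -> path e s pR -> pR <> [::] ->
  path e d q -> last d q = cM -> height d <= height s ->
  height cM <= height (last s pL) -> height cM <= height (last s pR) ->
  (forall w, w \in s :: pL -> w \in s :: cM :: pM -> w = s) ->
  (forall w, w \in s :: cM :: pM -> w \in s :: pR -> w = s) ->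
  (forall w, w \in d :: q -> w \in s :: pL -> False) ->
  (forall w, w \in d :: q -> w \in s :: pR -> False) ->
  ~ path_x s pL (height s + /2) < path_x s (cM :: pM) (height s + /2) < path_x s pR (height s + /2).
Proof.
  move=> sL L0 sM sR R0 dq dqc ds cL cR LM MR DL DR Hord.
  have /andP [sc cpM] := sM.
  have Hsc := height_edge_succ_le sc.
  have HcM : height cM <= height (last s (cM :: pM)) := height_path_le cpM.
  have q0 : q <> [::] by move=> q0; move: dqc ds; rewrite q0 /= => ->; lra.
  have HM : path_x s (cM :: pM) (height cM) = px cM.
    by rewrite /= (edge_x_above sc) ?(path_x_below cpM); lra.
  have HD : path_x d q (height cM) = px cM by rewrite (path_x_above dq) dqc //; lra.
  have Hh1 := height_path_le sL; have Hh2 := height_path_le sR.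
  have cLM : forall w, w \in s :: pL -> w \in s :: cM :: pM -> height w < height s + /2.
    by move=> w /LM Hw /Hw ->; lra.
  have cMR : forall w, w \in s :: cM :: pM -> w \in s :: pR -> height w < height s + /2.
    by move=> w /MR Hw /Hw ->; lra.
  have cLD : forall w, w \in s :: pL -> w \in d :: q -> height w < height s.
    by move=> w Hw /DL /(_ Hw).
  have cDR : forall w, w \in d :: q -> w \in s :: pR -> height w < height s.
    by move=> w /DR.
  have HLM : path_x s pL (height cM) < px cM.
    rewrite -HM; apply/(path_x_lt_iff sL L0 sM _ _ _ _ _ _ cLM); done || lra.
  have HMR : px cM < path_x s pR (height cM).
    rewrite -HM; apply/(path_x_lt_iff sM _ sR R0 _ _ _ _ _ cMR); done || lra.
  have HLD : path_x s pL (height s) < path_x d q (height s).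
    apply/(path_x_lt_iff (b := height cM) sL L0 dq q0 _ _ _ _ _ cLD); rewrite ?dqc ?HD; lra.
  have HDR : path_x d q (height s) < path_x s pR (height s).
    apply/(path_x_lt_iff (b := height cM) dq q0 sR R0 _ _ _ _ _ cDR); rewrite ?dqc ?HD; lra.
  by move: HLD HDR; rewrite (path_x_below sL) ?(path_x_below sR); lra.
Qed.

Lemma exists_middle3 (v : 'I_3 -> R) : injective v ->
  exists i j k : 'I_3, [/\ i != j, k != j & v i < v j < v k].
Proof.
  move=> inj_v.
  pose a : 'I_3 := ord0; pose b : 'I_3 := Ordinal (isT : (1 < 3)%N); pose c : 'I_3 := ord_max.
  have ne i j : i != j -> v i <> v j by move=> /eqP ij /inj_v.
  have [ab|ab] := Rdichotomy _ _ (ne a b isT);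
  have [bc|bc] := Rdichotomy _ _ (ne b c isT);
  have [ac|ac] := Rdichotomy _ _ (ne a c isT).
  all: first [ by exists a, b, c; split => //; lra | by exists c, b, a; split => //; lra
             | by exists b, a, c; split => //; lra | by exists c, a, b; split => //; lra
             | by exists a, c, b; split => //; lra | by exists b, c, a; split => //; lra | lra ].
Qed.

Lemma no_three_arms_over_lower_paths s (c d : 'I_3 -> 'I_n) (p q : 'I_3 -> seq 'I_n) :
  (forall i, path e s (c i :: p i)) ->
  (forall i, path e (d i) (q i) /\ last (d i) (q i) = c i) ->
  (forall i, height (d i) <= height s) ->
  (forall i j, height (c i) <= height (last (c j) (p j))) ->
  (forall i j w, i != j -> w \in s :: c i :: p i -> w \in s :: c j :: p j -> w = s) ->
  (forall i j w, i != j -> w \in d i :: q i -> w \in s :: c j :: p j -> False) ->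
  False.
Proof.
  move=> arm lower ds ctop armsI lowerI.
  pose v i := path_x s (c i :: p i) (height s + /2).
  have range i : height s <= height s + /2 <= height (last s (c i :: p i)).
    have /andP [sc cp] := arm i.
    by have := height_edge_succ_le sc; have := height_path_le cp; rewrite /=; lra.
  have inj_v : injective v.
    move=> i j Hv; case: (eqVneq i j) => // ij; exfalso.
    apply: (path_x_neq (arm i) _ (arm j)) Hv => // w Hi Hj.
    by rewrite (armsI i j w ij Hi Hj); lra.
  have [i [j [k [ij kj Hord]]]] := exists_middle3 inj_v.
  have [dq dqc] := lower j.
  apply: (no_lower_path_to_middle_arm (arm i) _ (arm j) (arm k) _ dq dqc) Hord => //.
  - exact: ctop.
  - exact: ctop.
  - by move=> w; apply: armsI.
  - by move=> w; apply: armsI; rewrite eq_sym.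
  - by move=> w; apply: lowerI; rewrite eq_sym.
  - by move=> w; apply: lowerI; rewrite eq_sym.
Qed.

End LayeredDrawing.

Section ParentTree.
Variables (n : nat) (e : rel 'I_n) (r : 'I_n) (parent : 'I_n -> 'I_n) (depth : 'I_n -> nat).
Hypothesis depth_parent : forall v, v <> r -> depth (parent v) < depth v.
Hypothesis uadj_parent : forall u v,
  uadj e u v <-> (u = parent v /\ v <> r) \/ (v = parent u /\ u <> r).

Lemma uadj_sym : symmetric (uadj e).
Proof. by move=> u v; rewrite /uadj orbC. Qed.

Lemma connect_root v : connect (uadj e) v r.
Proof.
  elim: {v}(depth v).+1 {-2}v (ltnSn (depth v)) => [//|k IH] v Hv.
  have [->|vr] := eqVneq v r; first exact: connect0.
  apply: connect_trans (connect1 _) (IH _ _).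
  - by apply/uadj_parent; right; split => //; apply/eqP.
  - by have := depth_parent (elimN eqP vr); lia.
Qed.

Lemma connect_uadj u v : connect (uadj e) u v.
Proof.
  apply: connect_trans (connect_root u) _.
  by rewrite (sym_connect_sym uadj_sym) connect_root.
Qed.

Lemma uadj_parent_of_depth u v : uadj e u v -> depth v <= depth u -> v = parent u.
Proof.
  case/uadj_parent => [[-> vr] /(leq_trans (depth_parent vr))|[] //].
  by rewrite ltnn.
Qed.

(* In a cycle, the vertex of maximum depth has two distinct neighbours, both of which would
   have to be its parent. *)
Lemma no_ucycle_parent : ~ has_ucycle e.
Proof.
  case=> -[|x s] [Hsize Huniq Hcycle]; first by [].
  have [w ws Hmax] := @arg_maxnP _ x (mem (x :: s)) depth (mem_head x s).
  have [i c Hrot] := rot_to ws.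
  have Hmem z : z \in w :: c -> depth z <= depth w by rewrite -Hrot mem_rot => /Hmax.
  move: Hsize Huniq Hcycle; rewrite -(size_rot i) -(rot_uniq i) -(rot_cycle i) Hrot.
  case: c Hrot Hmem => [//|a [//|b c]] _ Hmem _.
  rewrite cons_uniq => /andP [_]; rewrite cons_uniq => /andP [anot _].
  rewrite /cycle rcons_path => /andP [/andP [wa _] zw].
  have Ea : a = parent w by apply: uadj_parent_of_depth wa (Hmem _ _); rewrite !inE eqxx orbT.
  have Ez : last b c = parent w.
    apply: uadj_parent_of_depth; first by rewrite uadj_sym.
    by apply: Hmem; do 2 apply: mem_behead; exact: mem_last.
  by move: anot; rewrite Ea -Ez mem_last.
Qed.

End ParentTree.

Inductive node := Root | Col of nat & nat | Tail of nat.

Lemma node_comparable : comparable node.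
Proof. by move=> x y; rewrite /decidable; decide equality; apply: decP eqP. Qed.

HB.instance Definition _ := comparableMixin node_comparable.

Section Nodes.
Variable m : nat.

Local Notation col_size := (2 * m).+1.

Definition valid (K : node) : bool := if K is Col i o then (i < 3) && (o <= 2 * m) else true.

Definition code (K : node) : nat :=
  match K with
  | Root => 0
  | Col i o => 1 + i * col_size + o
  | Tail t => 1 + 3 * col_size + t
  end.

Definition decode (v : nat) : node :=
  if v == 0 then Root
  else if v <= 3 * col_size then Col (v.-1 %/ col_size) (v.-1 %% col_size)
  else Tail (v - 1 - 3 * col_size).

Lemma decodeK : cancel decode code.
Proof.
  move=> v; rewrite /decode; case: eqP => [-> //|v0].
  case: ifP => Hv /=; last lia.
  by rewrite -addnA -divn_eq; lia.
Qed.

Lemma valid_decode v : valid (decode v).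
Proof.
  rewrite /decode; case: eqP => // v0; case: ifP => // Hv /=.
  by apply/andP; split; [rewrite ltn_divLR //; lia | rewrite -ltnS ltn_pmod].
Qed.

Lemma codeK K : valid K -> decode (code K) = K.
Proof.
  rewrite /decode; case: K => [|i o|t] //=.
  - case/andP=> Hi Ho; have Hi' : i * col_size <= 2 * col_size by rewrite leq_mul2r; lia.
    rewrite -addnA add1n /= ifT; last lia.
    by rewrite divnMDl // modnMDl divn_small ?modn_small ?addn0.
  - by move=> _; rewrite -addnA add1n /= ifF; [congr Tail; lia | lia].
Qed.

(* The tail is a zigzag path whose edges alternate in direction: it pads the tree to any
   number of vertices without creating long directed paths. *)
Definition node_edge (K K' : node) : bool :=
  match K, K' with
  | Root, Col i o => (i < 3) && (o == m)
  | Col i o, Col i' o' => (i' == i) && (o' == o.+1) && (o' <= 2 * m)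
  | Tail t, Col i o => (t == 0) && (i == 0) && (o == 2 * m)
  | Tail t, Tail t' => (t' == t.+1) && ~~ odd t || (t == t'.+1) && odd t'
  | _, _ => false
  end.

Inductive edge_shape : node -> node -> Prop :=
| RootCol i : i < 3 -> edge_shape Root (Col i m)
| ColUp i o : i < 3 -> o < 2 * m -> edge_shape (Col i o) (Col i o.+1)
| TailCol : edge_shape (Tail 0) (Col 0 (2 * m))
| TailUp t : ~~ odd t -> edge_shape (Tail t) (Tail t.+1)
| TailDown t : odd t -> edge_shape (Tail t.+1) (Tail t).

Lemma node_edgeP K K' : valid K -> reflect (edge_shape K K') (node_edge K K').
Proof.
  move=> vK; apply: (iffP idP); last first.
    case=> [i Hi|i o Hi Ho||t Ht|t Ht] /=; rewrite ?eqxx ?Hi ?Ho //.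
    - by rewrite Ht.
    - by rewrite Ht orbT.
  case: K K' vK => [|i o|t] [|i' o'|t'] //=.
  - by move=> _ /andP [Hi /eqP ->]; constructor.
  - by move=> /andP [Hi _] /andP [/andP [/eqP -> /eqP ->] Ho]; constructor.
  - by move=> _ /andP [/andP [/eqP -> /eqP ->] /eqP ->]; constructor.
  - by move=> _ /orP [] /andP [/eqP -> Ht]; constructor.
Qed.

Definition parent (K : node) : node :=
  match K with
  | Root => Root
  | Col i o => if o == m then Root else if m < o then Col i o.-1 else Col i o.+1
  | Tail 0 => Col 0 (2 * m)
  | Tail t.+1 => Tail t
  end.

Definition depth (K : node) : nat :=
  match K with Root => 0 | Col _ o => 1 + (o - m) + (m - o) | Tail t => m + 2 + t end.

Lemma valid_parent K : valid K -> valid (parent K).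
Proof.
  case: K => [|i o|[|t]] //= /andP [Hi Ho].
  by case: eqP => // Hom; case: ifP => Hmo /=; rewrite Hi; lia.
Qed.

Lemma depth_parent K : K <> Root -> depth (parent K) < depth K.
Proof.
  case: K => [//|i o|[|t]] _ /=; try lia.
  by case: eqP => Hom /=; [lia | case: ifP => Hmo /=; lia].
Qed.

Lemma code_parent_le K : valid K -> code (parent K) <= maxn (code K) (3 * col_size).
Proof.
  case: K => [|i o|[|t]] //= => [/andP [Hi Ho]||]; last lia; last lia.
  have Hi' : i * col_size <= 2 * col_size by rewrite leq_mul2r; lia.
  by case: eqP => Hom /=; last case: ifP => Hmo /=; lia.
Qed.

Lemma edge_shape_parent K K' : edge_shape K K' ->
  (K = parent K' /\ K' <> Root) \/ (K' = parent K /\ K <> Root).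
Proof.
  case=> [i Hi|i o Hi Ho||t Ht|t Ht] /=.
  - by left; rewrite eqxx.
  - have [Hom|Hom] := ltnP o m.
    + by right; rewrite ifF ?ifF //; lia.
    + by left; rewrite ifF ?ifT //; lia.
  - by right.
  - by left.
  - by right.
Qed.

Lemma parent_edge_shape K : valid K -> K <> Root ->
  edge_shape (parent K) K \/ edge_shape K (parent K).
Proof.
  case: K => [//|i o|[|t]] /= vK _.
  - case/andP: vK => Hi Ho; case: eqP => [->|Hom]; first by left; constructor.
    case: ifP => Hmo.
    + by left; case: o Ho Hom Hmo => [|o] //= Ho _ _; constructor; lia.
    + by right; constructor; lia.
  - by right; constructor.
  - by case Ht: (odd t); [right | left]; constructor; rewrite ?Ht.
Qed.

Lemma adj_parent K K' : valid K -> valid K' ->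
  node_edge K K' || node_edge K' K <->
  (K = parent K' /\ K' <> Root) \/ (K' = parent K /\ K <> Root).
Proof.
  move=> vK vK'; split.
  - case/orP=> [/(node_edgeP _ vK)|/(node_edgeP _ vK')] /edge_shape_parent; first done.
    by case; [right | left].
  - case=> [[-> Hr]|[-> Hr]].
    + case: (parent_edge_shape vK' Hr).
      * by move/(node_edgeP _ (valid_parent vK')) ->.
      * by move/(node_edgeP _ vK') ->; rewrite orbT.
    + case: (parent_edge_shape vK Hr).
      * by move/(node_edgeP _ (valid_parent vK)) ->; rewrite orbT.
      * by move/(node_edgeP _ vK) ->.
Qed.

(* Every edge raises the level by one, so directed paths are no longer than the range of
   [level]. *)
Definition level (K : node) : Z :=
  match K with
  | Root => 0
  | Col _ o => Z.of_nat o + 1 - Z.of_nat m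
  | Tail t => Z.of_nat m + Z.b2z (odd t)
  end.

Lemma level_edge_shape K K' : edge_shape K K' -> level K' = (level K + 1)%Z.
Proof.
  case=> [i Hi|i o Hi Ho||t Ht|t Ht]; cbn [level odd].
  - lia.
  - lia.
  - by rewrite -multE; lia.
  - by rewrite (negbTE Ht); lia.
  - by rewrite Ht; lia.
Qed.

Lemma level_le K : valid K -> (level K <= Z.of_nat m + 1)%Z.
Proof.
  by case: K => [_|i o /andP [_ Ho]|t _]; cbn [level]; lia.
Qed.

Lemma level_ge K : valid K -> level K = 0%Z \/ (1 - Z.of_nat m <= level K)%Z.
Proof.
  by case: K => [_|i o _|t _]; cbn [level]; lia.
Qed.

Definition neighbours (K : node) : seq node :=
  match K with
  | Root => [:: Col 0 m; Col 1 m; Col 2 m]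
  | Col i o => [:: parent K; Col i o.-1; if (i == 0) && (o == 2 * m) then Tail 0 else Col i o.+1]
  | Tail t => [:: parent K; Tail t.+1]
  end.

Lemma size_neighbours K : size (neighbours K) <= 3.
Proof. by case: K. Qed.

Lemma edge_shape_neighbours K K' :
  edge_shape K K' \/ edge_shape K' K -> K' \in neighbours K.
Proof.
  case=> -[i Hi|i o Hi Ho||t Ht|t Ht]; rewrite /= ?eqxx ?inE ?eqxx ?orbT //.
  - by case: i Hi => [|[|[|]]] //= _; rewrite eqxx ?orbT.
  - by rewrite (_ : (o == 2 * m) = false) ?andbF ?eqxx ?orbT //; lia.
Qed.

Section Drawing.
Local Open Scope R_scope.

(* A straight-line drawing: the three columns stand at [x = -1, 0, 1], the middle one lifted
   by [m] so that it clears the edge from the root to the right column; the tail zigzags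
   leftwards between heights [m] and [m + 1]. *)
Definition node_x (K : node) : R :=
  match K with Root => - / 2 | Col i _ => INR i - 1 | Tail t => -2 - INR t end.

Definition node_y (K : node) : Z :=
  match K with
  | Root => 0
  | Col i o => Z.of_nat o + 1 - (if i == 1%N then 0 else Z.of_nat m)
  | Tail t => Z.of_nat m + Z.b2z (odd t)
  end%Z.

Definition node_yR (K : node) : R :=
  match K with
  | Root => 0
  | Col i o => INR o + 1 - (if i == 1%N then 0 else INR m)
  | Tail t => INR m + (if odd t then 1 else 0)
  end.

Lemma IZR_node_y K : IZR (node_y K) = node_yR K.
Proof.
  case: K => [|i o|t] //=.
  - by rewrite minus_IZR plus_IZR -INR_IZR_INZ; case: (i == 1%N); rewrite -?INR_IZR_INZ.
  - by rewrite plus_IZR -INR_IZR_INZ; case: (odd t).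
Qed.

Definition segment (K K' : node) (s : R) : R * R :=
  (node_x K + s * (node_x K' - node_x K), node_yR K + s * (node_yR K' - node_yR K)).

Lemma segment0 K K' : segment K K' 0 = (node_x K, node_yR K).
Proof. by rewrite /segment; f_equal; ring. Qed.

Lemma segment1 K K' : segment K K' 1 = (node_x K', node_yR K').
Proof. by rewrite /segment; f_equal; ring. Qed.

Lemma node_y_edge_shape K K' : edge_shape K K' -> (node_y K < node_y K')%Z.
Proof.
  case=> [i Hi|i o Hi Ho||t Ht|t Ht]; cbn [node_y odd]; try by case: (i == 1%N); lia.
  - by rewrite -multE (_ : (0 == 1)%N = false) //; cbn [Z.b2z]; lia.
  - by rewrite (negbTE Ht); lia.
  - by rewrite Ht; lia.
Qed.

Lemma node_yR_edge_shape K K' : edge_shape K K' -> node_yR K < node_yR K'.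
Proof. by move=> /node_y_edge_shape /IZR_lt; rewrite !IZR_node_y. Qed.

Ltac case_lt3 i := (have : (i = 0 \/ i = 1 \/ i = 2)%N by lia); case=> [->|[->|->]].

Lemma node_xy_inj K K' : valid K -> valid K' ->
  node_x K = node_x K' -> node_yR K = node_yR K' -> K = K'.
Proof.
  have Hm := pos_INR m.
  case: K K' => [|i o|t] [|i' o'|t'] //= vK vK' Hx Hy.
  all: try (have := pos_INR t; intro); try (have := pos_INR t'; intro).
  all: try (move: vK => /andP [Hi Ho]); try (move: vK' => /andP [Hi' Ho']).
  all: move: Hx Hy; try case_lt3 i; try case_lt3 i'; move=> Hx Hy.
  all: cbn -[INR] in Hx, Hy; rewrite ?S_INR ?INR_0 in Hx Hy; try lra.
  all: try (congr Col; apply: INR_eq; lra).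
  by congr Tail; apply: INR_eq; lra.
Qed.

Lemma unit_nat_gap s a b : 0 <= s <= 1 -> s + INR a = INR b -> s = 0 \/ s = 1.
Proof.
  move=> Hs Hab; have : (b <= a \/ b = a.+1 \/ a.+2 <= b)%N by lia.
  case=> [H|[H|H]].
  - have : INR b <= INR a by apply: le_INR; lia.
    lra.
  - by move: Hab; rewrite H S_INR; lra.
  - have : INR a.+2 <= INR b by apply: le_INR; lia.
    by rewrite !S_INR; lra.
Qed.

Lemma unit_nat_gap2 s t a b : 0 <= s <= 1 -> 0 <= t <= 1 -> s + INR a = t + INR b -> a <> b ->
  (s = 0 \/ s = 1) /\ (t = 0 \/ t = 1).
Proof.
  move=> Hs Ht Hab Hne; have : (a.+1 <= b \/ b.+1 <= a)%N by lia.
  case=> H.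
  - have : INR a.+1 <= INR b by apply: le_INR; lia.
    by rewrite S_INR; lra.
  - have : INR b.+1 <= INR a by apply: le_INR; lia.
    by rewrite S_INR; lra.
Qed.

Ltac endpoint_cases :=
  solve [ exfalso; lra | exfalso; nra | split; solve [left; lra | right; lra] ].

(* Each pair of edge shapes is either refuted by the arithmetic of the coordinates or pins
   [s] and [t] to endpoints by an integrality argument. *)
Lemma segment_meet K1 K2 K3 K4 s t : edge_shape K1 K2 -> edge_shape K3 K4 ->
  K1 <> K3 \/ K2 <> K4 -> 0 <= s <= 1 -> 0 <= t <= 1 -> segment K1 K2 s = segment K3 K4 t ->
  (s = 0 \/ s = 1) /\ (t = 0 \/ t = 1).
Proof.
  move=> H1 H2 Hne Hs Ht; rewrite /segment; case=> Hx Hy.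
  have Hm := pos_INR m.
  case: H1 Hne Hx Hy => [i Hi|i o Hi Ho||t1 Ht1|t1 Ht1];
  case: H2 => [j Hj|j o' Hj Ho'||t2 Ht2|t2 Ht2].
  all: try case_lt3 i; try case_lt3 j.
  all: cbn -[INR]; move=> Hne Hx Hy; rewrite ?S_INR ?INR_0 in Hx Hy.
  all: try (have := pos_INR t1; intro); try (have := pos_INR t2; intro).
  all: try (have := pos_INR o; intro); try (have := pos_INR o'; intro).
  all: try endpoint_cases.
  all: try (exfalso; case: Hne => Hne; apply: Hne; reflexivity).
  3-5: (have Es : s = 1 by lra); subst s; split; first by right.
  3-5: by apply: (unit_nat_gap (a := o') (b := m)) => //; lra.
  3-5: (have Et : t = 1 by lra); subst t; split; last by right.
  3-5: by apply: (unit_nat_gap (a := o) (b := m)) => //; lra.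
  3-5: have Hoo : o <> o' by move=> E; subst o'; case: Hne.
  3-5: by apply: (unit_nat_gap2 (a := o) (b := o')) => //; lra.
  - (have Es : s = 3 * t by lra); subst s.
    (have Et : t = 0 by nra); subst t; split; left; lra.
  - (have Et : t = 3 * s by lra); subst t.
    (have Es : s = 0 by nra); subst s; split; left; lra.
  - (have Et : t = 1 by lra); subst t; split; [|by right].
    by apply: (unit_nat_gap (a := o) (b := 2 * m)) => //; lra.
  - (have Es : s = 1 by lra); subst s; split; [by right|].
    by apply: (unit_nat_gap (a := o') (b := 2 * m)) => //; lra.
  - have Htt : t1 <> t2 by move=> E; subst t2; case: Hne.
    by apply: (unit_nat_gap2 (a := t1) (b := t2)) => //; lra.
  - have Htt : t2 <> t1 by move=> E; subst t2; rewrite Ht2 in Ht1.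
    have := unit_nat_gap2 (s := 1 - s) (t := t) (a := t2) (b := t1) ltac:(lra) Ht ltac:(lra) Htt.
    by case=> [[Ha|Ha] Hb]; split; auto; lra.
  - have Htt : t2 <> t1 by move=> E; subst t2; rewrite Ht1 in Ht2.
    have := unit_nat_gap2 (s := s) (t := 1 - t) (a := t2) (b := t1) Hs ltac:(lra) ltac:(lra) Htt.
    by case=> [Ha [Hb|Hb]]; split; auto; lra.
  - have Htt : t2 <> t1 by move=> E; subst t2; case: Hne.
    by apply: (unit_nat_gap2 (a := t2) (b := t1)) => //; lra.
Qed.

End Drawing.

End Nodes.

Section TreeGraph.
Variables (m n' : nat).
Hypothesis n_large : 6 * m + 4 <= n'.+1.
Local Notation N := n'.+1.
Local Notation decode := (decode m).
Local Notation code := (code m).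
Local Notation valid := (valid m).
Local Notation parent := (parent m).

Definition vertex (K : node) : 'I_N := inord (code K).
Definition tree_edge : rel 'I_N := fun u v => node_edge m (decode u) (decode v).

Lemma decodeK_vertex (u : 'I_N) : vertex (decode u) = u.
Proof. by apply: val_inj; rewrite /vertex /= decodeK inordK. Qed.

Lemma vertexK K : valid K -> code K < N -> decode (vertex K) = K.
Proof. by move=> vK HK; rewrite /vertex inordK ?codeK. Qed.

Lemma decode_inj (u v : 'I_N) : decode u = decode v -> u = v.
Proof. by move=> Euv; rewrite -(decodeK_vertex u) Euv decodeK_vertex. Qed.

Lemma vertexK_col i o : i < 3 -> o <= 2 * m -> decode (vertex (Col i o)) = Col i o.
Proof.
  move=> Hi Ho; apply: vertexK; first by rewrite /= Hi Ho.
  have : i * (2 * m).+1 <= 2 * (2 * m).+1 by rewrite leq_mul2r; lia.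
  rewrite /=; lia.
Qed.

Lemma vertexK_root : decode (vertex Root) = Root.
Proof. exact: vertexK. Qed.

Lemma vertexK_parent (u : 'I_N) : decode (vertex (parent (decode u))) = parent (decode u).
Proof.
  have vu := valid_decode m u; apply: vertexK; first exact: valid_parent.
  have := code_parent_le vu; rewrite decodeK; have := ltn_ord u; lia.
Qed.

Lemma tree_edge_shape u v : tree_edge u v -> edge_shape m (decode u) (decode v).
Proof. exact/node_edgeP/valid_decode. Qed.

Lemma level_path x p : path tree_edge x p ->
  level m (decode (last x p)) = (level m (decode x) + Z.of_nat (size p))%Z.
Proof.
  elim: p x => [|z p IH] x /=; first lia.
  by case/andP=> /tree_edge_shape/level_edge_shape xz /IH ->; rewrite xz; lia.
Qed.

Lemma vertex_root_neq u : u <> vertex Root <-> decode u <> Root.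
Proof.
  split=> Hu Eu; apply: Hu; last by rewrite Eu vertexK_root.
  by apply: decode_inj; rewrite Eu vertexK_root.
Qed.

Lemma uadj_tree_edge u v : uadj tree_edge u v <->
  (u = vertex (parent (decode v)) /\ v <> vertex Root) \/
  (v = vertex (parent (decode u)) /\ u <> vertex Root).
Proof.
  have parentE (w w' : 'I_N) : w = vertex (parent (decode w')) <-> decode w = parent (decode w').
    by split=> [->|Hw]; [exact: vertexK_parent | apply: decode_inj; rewrite vertexK_parent].
  rewrite /uadj /tree_edge (adj_parent (valid_decode m u) (valid_decode m v)).
  by rewrite !parentE !vertex_root_neq.
Qed.

Lemma directed_tree_tree_edge : directed_tree tree_edge.
Proof.
  have level_edge u v : tree_edge u v -> level m (decode v) = (level m (decode u) + 1)%Z.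
    by move/tree_edge_shape/level_edge_shape.
  split.
  - move=> u v uv; apply/negP => /connectP [p Hp Hu].
    by have := level_path Hp; rewrite -Hu (level_edge _ _ uv); lia.
  - have Hdepth v :
        v <> vertex Root -> depth m (decode (vertex (parent (decode v)))) < depth m (decode v).
      by rewrite vertexK_parent vertex_root_neq; apply: depth_parent.
    split => //.
    + split=> [u|u v uv]; apply/negP.
      * by move/level_edge; lia.
      * by move/level_edge; have := level_edge _ _ uv; lia.
    + exact: connect_uadj Hdepth uadj_tree_edge.
    + exact: no_ucycle_parent Hdepth uadj_tree_edge.
Qed.

Lemma degree_tree_edge v : degree tree_edge v <= 3.
Proof.
  rewrite /degree; set nbs := [seq vertex K | K <- neighbours m (decode v)].
  apply: leq_trans (subset_leq_card (B := [set w in nbs]) _) _.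
  - apply/subsetP => w; rewrite !inE /uadj /tree_edge => Hw.
    have : edge_shape m (decode v) (decode w) \/ edge_shape m (decode w) (decode v).
      by case/orP: Hw => /(node_edgeP _ (valid_decode m _)); [left | right].
    by move/edge_shape_neighbours=> Hn; rewrite -(decodeK_vertex w); apply: map_f.
  - by rewrite cardsE; apply: leq_trans (card_size _) _; rewrite size_map size_neighbours.
Qed.

Lemma paths_at_most_tree_edge l : 2 * m <= l -> m + 1 <= l -> paths_at_most tree_edge l.
Proof.
  move=> H1 H2 x p Hp; have := level_path Hp.
  have := level_ge (valid_decode m x); have := level_le (valid_decode m (last x p)); lia.
Qed.

End TreeGraph.

Section TreeDrawing.
Local Open Scope R_scope.
Variables (m n' : nat).
Hypothesis n_large : (6 * m + 4 <= n'.+1)%N.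
Local Notation N := n'.+1.
Local Notation decode := (decode m).
Local Notation vertex := (@vertex m n').
Local Notation tree_edge := (@tree_edge m n').

Definition tree_px (u : 'I_N) : R := node_x (decode u).
Definition tree_y (u : 'I_N) : Z := node_y m (decode u).
Definition tree_curve (u v : 'I_N) : R -> R * R := segment m (decode u) (decode v).

Lemma vpt_tree u : vpt tree_px tree_y u = (node_x (decode u), node_yR m (decode u)).
Proof. by rewrite /vpt /tree_px /tree_y IZR_node_y. Qed.

Lemma tree_vpt_inj u v : vpt tree_px tree_y u = vpt tree_px tree_y v -> u = v.
Proof.
  rewrite !vpt_tree => -[Hx Hy]; apply: decode_inj.
  exact: node_xy_inj (valid_decode m u) (valid_decode m v) Hx Hy.
Qed.

Lemma tree_curve0 u v : tree_curve u v 0 = vpt tree_px tree_y u.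
Proof. by rewrite /tree_curve segment0 vpt_tree. Qed.

Lemma tree_curve1 u v : tree_curve u v 1 = vpt tree_px tree_y v.
Proof. by rewrite /tree_curve segment1 vpt_tree. Qed.

Lemma tree_curve_meet u v u' v' s t : tree_edge u v -> tree_edge u' v' -> (u, v) <> (u', v') ->
  in01 s -> in01 t -> tree_curve u v s = tree_curve u' v' t ->
  (s = 0 \/ s = 1) /\ (t = 0 \/ t = 1).
Proof.
  move=> uv uv' Hne Hs Ht Heq.
  apply: (segment_meet (tree_edge_shape uv) (tree_edge_shape uv') _ Hs Ht Heq).
  have [Eu|Nu] := eqVneq u u'; last by left=> /decode_inj Eu; rewrite Eu eqxx in Nu.
  right=> /decode_inj Ev; apply: Hne; by rewrite Eu Ev.
Qed.

Lemma tree_edge_incident (w : 'I_N) : exists u v, tree_edge u v /\ (w = u \/ w = v).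
Proof.
  have [Hw|Hw] := eqVneq (decode w) Root.
  - exists w, (vertex (Col 0 m)); split; last by left.
    by rewrite /tree_edge Hw vertexK_col //= ?eqxx; lia.
  - have := parent_edge_shape (valid_decode m w) (elimN eqP Hw).
    have Ep := vertexK_parent n_large w; set p := vertex _ in Ep.
    rewrite -Ep; case.
    + by move/(node_edgeP _ (valid_decode m p)) => pw; exists p, w; auto.
    + by move/(node_edgeP _ (valid_decode m w)) => wp; exists w, p; auto.
Qed.

Lemma layered_drawing_tree : layered_drawing tree_edge tree_px tree_y tree_curve.
Proof.
  constructor.
  - exact: tree_vpt_inj.
  - by move=> u v _; rewrite /tree_curve /segment /=; split; reg.
  - by move=> u v _; exact: tree_curve0.
  - by move=> u v _; exact: tree_curve1.
  - move=> u v uv s t Hs Ht Hst; rewrite /tree_curve /segment /=.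
    have := node_yR_edge_shape (tree_edge_shape uv); rewrite /in01 in Hs Ht; nra.
  - move=> u v uv t Ht w Hw.
    have [a [b [ab Hab]]] := tree_edge_incident w.
    have [r [Hr Er]] : exists r, (r = 0 \/ r = 1) /\ tree_curve a b r = vpt tree_px tree_y w.
      by case: Hab => ->; [exists 0 | exists 1]; rewrite ?tree_curve0 ?tree_curve1; auto.
    have [[Ea Eb]|Hne] := eqVneq (u, v) (a, b).
    + subst a b; move: Hw; rewrite -Er /tree_curve /segment => -[_].
      by have := node_yR_edge_shape (tree_edge_shape uv); case: Hr => ->; nra.
    + have Hmeet := etrans Hw (esym Er).
      have Ht01 : in01 t by rewrite /in01; lra.
      have Hr01 : in01 r by rewrite /in01; lra.
      by have [] := tree_curve_meet uv ab (elimN eqP Hne) Ht01 Hr01 Hmeet; lra.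
  - move=> u v u' v' uv uv' Hne s t Hs Ht Heq.
    have [Hs01 Ht01] := tree_curve_meet uv uv' Hne Hs Ht Heq.
    have Hpt (a b : 'I_N) r : r = 0 \/ r = 1 ->
        exists x, (x = a \/ x = b) /\ tree_curve a b r = vpt tree_px tree_y x.
      by case=> ->; [exists a | exists b]; rewrite ?tree_curve0 ?tree_curve1; auto.
    have [x [Hx Ex]] := Hpt u v s Hs01; have [x' [Hx' Ex']] := Hpt u' v' t Ht01.
    have Hxx : x = x' by apply: tree_vpt_inj; rewrite -Ex -Ex'.
    by exists x; split => //; split => //; rewrite Hxx.
Qed.

End TreeDrawing.

Section TreeSpan.
Variables (m n' : nat).
Hypothesis n_large : 6 * m + 4 <= n'.+1.
Local Notation N := n'.+1.
Local Notation decode := (decode m).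
Local Notation vertex := (@vertex m n').
Local Notation tree_edge := (@tree_edge m n').

Definition column (i : nat) (a k : nat) : seq 'I_N := [seq vertex (Col i o) | o <- iota a k].

Lemma path_column i a k : i < 3 -> a + k <= 2 * m ->
  path tree_edge (vertex (Col i a)) (column i a.+1 k).
Proof.
  move=> Hi; elim: k a => [//|k IH] a Hk /=; apply/andP; split; last by apply: IH; lia.
  by rewrite /tree_edge !vertexK_col //= ?eqxx ?Hi; lia.
Qed.

Lemma last_column i a k : last (vertex (Col i a)) (column i a.+1 k) = vertex (Col i (a + k)).
Proof. by elim: k a => [|k IH] a /=; rewrite ?addn0 // IH addSnnS. Qed.

Lemma mem_column i a k w : w \in column i a k -> exists2 o, o < a + k & w = vertex (Col i o).
Proof. by case/mapP=> o; rewrite mem_iota => /andP [_ Ho] ->; exists o. Qed.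

Lemma tree_edge_root i : i < 3 -> tree_edge (vertex Root) (vertex (Col i m)).
Proof. by move=> Hi; rewrite /tree_edge vertexK_root vertexK_col //= ?Hi ?eqxx //; lia. Qed.

Lemma vertex_col_inj (i j : 'I_3) o o' : o <= 2 * m -> o' <= 2 * m ->
  vertex (Col i o) = vertex (Col j o') -> i = j.
Proof.
  move=> Ho Ho' /(congr1 (fun u : 'I_N => decode u)); rewrite !vertexK_col // => -[Eij _].
  exact: val_inj.
Qed.

Lemma vertex_col_neq_root i o : i < 3 -> o <= 2 * m -> vertex (Col i o) <> vertex Root.
Proof. by move=> Hi Ho /(congr1 (fun u : 'I_N => decode u)); rewrite vertexK_col ?vertexK_root. Qed.

(* If every edge spanned at most [m] levels, the lower half of each column would start below
   the root while the upper half of each column would rise above the middle vertices of the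
   other two: the configuration excluded by [no_three_arms_over_lower_paths]. *)
Lemma drawing_span_ge_tree px y crv :
  layered_drawing tree_edge px y crv -> drawing_span_ge tree_edge y m.+1.
Proof.
  move=> D; apply: NNPP => Hneg.
  have Hspan u v : tree_edge u v -> (y v - y u <= Z.of_nat m)%Z.
    move=> uv; apply: Znot_gt_le => Hgt; apply: Hneg; exists u, v; split => //; lia.
  have col_lt (i : 'I_3) : i < 3 := ltn_ord i.
  have arm_path (i : 'I_3) : path tree_edge (vertex Root) (column i m m.+1).
    by rewrite /= tree_edge_root //; apply: path_column => //; lia.
  have lower_path (i : 'I_3) : path tree_edge (vertex (Col i 0)) (column i 1 m).
    by apply: path_column => //; lia.
  have y_upper (i : 'I_3) := y_path_size D (path_column (col_lt i) (a := m) (k := m) ltac:(lia)).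
  have y_lower (i : 'I_3) := y_path_size D (lower_path i).
  have y_root_span (i : 'I_3) := Hspan _ _ (tree_edge_root (col_lt i)).
  have y_root_lt (i : 'I_3) := y_edge_lt D (tree_edge_root (col_lt i)).
  have mem_arm (i : 'I_3) w : w \in vertex Root :: column i m m.+1 ->
      w = vertex Root \/ exists2 o, o <= 2 * m & w = vertex (Col i o).
    rewrite in_cons => /orP [/eqP ->|/mem_column [o Ho ->]]; [by left | right; exists o => //; lia].
  apply: (no_three_arms_over_lower_paths D (s := vertex Root) (c := fun i => vertex (Col i m))
    (p := fun i => column i m.+1 m) (d := fun i => vertex (Col i 0)) (q := fun i => column i 1 m)).
  - exact: arm_path.
  - by move=> i; rewrite last_column add0n.
  - move=> i; apply: IZR_le; have := y_lower i; have := y_root_span i.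
    by rewrite last_column size_map size_iota add0n; lia.
  - move=> i j; apply: IZR_le; have := y_upper j; have := y_root_span i; have := y_root_lt j.
    by rewrite last_column size_map size_iota; lia.
  - move=> i j w ij /mem_arm [//|[o Ho Ew]] /mem_arm [//|[o' Ho' Ew']].
    by move: ij; rewrite (vertex_col_inj Ho Ho' (etrans (esym Ew) Ew')) eqxx.
  - move=> i j w ij Hw; have /mem_column [o Ho Ew] : w \in column i 0 m.+1 := Hw.
    have Ho2 : o <= 2 * m by lia.
    case/mem_arm=> [Ew'|[o' Ho' Ew']].
    + by apply: (vertex_col_neq_root (col_lt i) Ho2); rewrite -Ew.
    + by move: ij; rewrite (vertex_col_inj Ho2 Ho' (etrans (esym Ew) Ew')) eqxx.
Qed.

End TreeSpan.

Theorem mainTheorem3 :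
  forall l n : nat, 0 < l -> 3 * l + 4 <= n ->
  exists e : rel 'I_n,
    [/\ directed_tree e,
        (forall v, degree e v <= 3),
        paths_at_most e l
      & span_ge e ((l + 2) %/ 2)].
Proof.
  move=> l [|n'] l_pos n_large; first lia.
  set m := l %/ 2.
  have m_large : 6 * m + 4 <= n'.+1 by rewrite /m; lia.
  exists (@tree_edge m n'); rewrite (_ : (l + 2) %/ 2 = m.+1); last by rewrite /m; lia.
  split.
  - exact: directed_tree_tree_edge.
  - exact: degree_tree_edge.
  - by apply: paths_at_most_tree_edge; rewrite /m; lia.
  - split; last by move=> px y crv; apply: drawing_span_ge_tree.
    by exists (@tree_px m n'), (@tree_y m n'), (@tree_curve m n'); apply: layered_drawing_tree.
Qed.
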